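(* Let $M_t=M_{y(t)}$, $y(t)=e^{i\theta(t)}$, $\theta(0)=\theta_0$, be the (ancient) spherical mean curvature flow of isoparametric hypersurfaces in $S^{n+1}$ with $g$ distinct principal curvatures, and let $A(t)$, $H(t)$ be the shape operator and (scalar) mean curvature of $M_t$ in $S^{n+1}$. Then $$\lim_{t\to-\infty}\|A(t)\|^2=(g-1)n.$$ If $M_0$ is not minimal, then $$\lim_{t\to-\infty}H^2(t)\,e^{-2gnt}=C_0,\qquad C_0=\frac{n^2(\cos g\theta_0+\delta)^2}{1-\delta^2}>0.$$
   Context: Let $M^n$ be a compact isoparametric hypersurface in the unit sphere $S^{n+1}\subset\mathbb{R}^{n+2}$ (constant principal curvatures) with $g$ distinct principal curvatures; then $g\in\{1,2,3,4,6\}$. Fix $x_0\in M$ and identify the 2-dimensional normal space $\nu_{x_0}M$ of $M$ in $\mathbb{R}^{n+2}$ with $\mathbb{C}$ so that the two focal submanifolds $M_+$, $M_-$ ($\dim M_+\le\dim M_-$) meet the normal circle at $1$ and $e^{i\pi/g}$ (the intersection points closest to $x_0$). The Weyl chamber is $C=\{re^{i\theta}:r>0,\ 0<\theta<\pi/g\}$. For $k=1,\dots,g$ let $\theta_k=k\pi/g-\pi/2$, $\alpha_k=e^{i\theta_k}$, and $m_k=m_1$ for $k$ odd, $m_k=m_2$ for $k$ even, where $(m_1,m_2)$, $m_1\le m_2$, is the multiplicity data of the principal curvatures; $m_1=m_2$ if $g$ is odd, and $(m_1+m_2)g=2n$. For $x\in C$, $M_x=\{p+\tilde\xi(p):p\in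 M\}$ where $\tilde\xi$ is the parallel normal field on $M$ with $\tilde\xi(x_0)=x-x_0$; it is an $n$-dimensional isoparametric submanifold of $\mathbb{R}^{n+2}$ lying in $S^{n+1}(|x|)$, with normal space $\nu_{x_0}M$ at $x$, and $T_xM_x=\oplus_kE_k$, $\dim E_k=m_k$, with Euclidean shape operator $A_\xi|_{E_k}=\langle\xi,-\alpha_k/\langle x,\alpha_k\rangle\rangle\mathrm{Id}$ ($\langle\cdot,\cdot\rangle$ the real inner product on $\mathbb{C}=\mathbb{R}^2$). $H^E(x),A^E(x)$ denote mean curvature vector and shape operator of $M_x$ at $x$ in $\mathbb{R}^{n+2}$; $H^S(x),A^S(x)$ those of $M_x$ as a hypersurface of $S^{n+1}(|x|)$; $\|A\|^2$ is the sum of squared Hilbert–Schmidt norms over an orthonormal normal basis. Set $\delta=(m_2-m_1)/(m_2+m_1)$ if $g\ge2$ and $\delta=0$ if $g=1$, and let $\theta_{\min}\in(0,\pi/g)$ be defined by $\cos g\theta_{\min}=-\delta$. The spherical MCF of $M_{y(0)}$ is the family $M_{y(t)}$ with $y(t)\in C$ unit and $y'(t)=H^S(y(t))$; it exists for all $t\le 0$. In the claim $A(t)=A^S(y(t))$ and $H^2(t)=\|H^S(y(t))\|^2$. *)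

From Stdlib Require Import Reals Lra.
Open Scope R_scope.

(* Points of the normal plane nu_{x0}M = C = R^2, as pairs. *)
Definition inner (u v : R * R) : R := fst u * fst v + snd u * snd v.
Definition rnorm (u : R * R) : R := sqrt (inner u u).

Fixpoint sum1 (f : nat -> R) (g : nat) : R :=
  match g with
  | O => 0
  | S g' => sum1 f g' + f (S g')
  end.

Definition theta_k (g k : nat) : R := INR k * PI / INR g - PI / 2.
Definition alpha_k (g k : nat) : R * R := (cos (theta_k g k), sin (theta_k g k)).

Definition mult (m1 m2 k : nat) : nat := if Nat.odd k then m1 else m2.

Definition in_chamber (g : nat) (x : R * R) : Prop :=
  exists r th, 0 < r /\ 0 < th /\ th < PI / INR g /\
    x = (r * cos th, r * sin th).

(* Eigenvalue of the Euclidean shape operator A_xi of M_x on E_k: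
   <xi, - alpha_k / <x, alpha_k>>. *)
Definition shape_eig (g k : nat) (x xi : R * R) : R :=
  inner xi ((- fst (alpha_k g k)) / inner x (alpha_k g k),
            (- snd (alpha_k g k)) / inner x (alpha_k g k)).

(* Unit normal of M_x inside the sphere S^{n+1}(|x|): the unit vector of
   nu_{x0}M orthogonal to x (i x / |x|). *)
Definition sphere_normal (x : R * R) : R * R :=
  (- snd x / rnorm x, fst x / rnorm x).

Definition AS_eig (g k : nat) (x : R * R) : R :=
  shape_eig g k x (sphere_normal x).

Definition HS_vec (g m1 m2 : nat) (x : R * R) : R * R :=
  let h := sum1 (fun k => INR (mult m1 m2 k) * AS_eig g k x) g in
  (h * fst (sphere_normal x), h * snd (sphere_normal x)).

(* ||A^S(x)||^2 : Hilbert-Schmidt norm squared, computed on the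
   eigenspace decomposition T_x M_x = (+)_k E_k, dim E_k = m_k. *)
Definition AS_normsq (g m1 m2 : nat) (x : R * R) : R :=
  sum1 (fun k => INR (mult m1 m2 k) * (AS_eig g k x) ^ 2) g.

Definition delta (g m1 m2 : nat) : R :=
  if (2 <=? g)%nat then (INR m2 - INR m1) / (INR m2 + INR m1) else 0.

Definition lim_minus_infty (f : R -> R) (L : R) : Prop :=
  forall eps, 0 < eps -> exists T, forall t, t <= T -> Rabs (f t - L) < eps.

(* Write a point of the unit circle as y = e^{i th}.  The principal curvatures of
   M_y in the sphere are tan (th - theta_k), and the cotangent-sum identities for
   g in {1,2,3,4,6} (checked case by case as polynomial identities in y, with
   c + i s = y^g) give
     H s = - n (c + delta),   |A|^2 s^2 = (g - 1) n s^2 + g n (c + delta) c.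
   The flow rotates y with angular speed H, so c' = - g H s = g n (c + delta) and
   c + delta = (cos (g theta0) + delta) e^{g n t}.  As t -> -oo, c tends to -delta,
   and both limits follow by continuity in e^{g n t}. *)

From Stdlib Require Import Reals Lra Lia Nsatz.
Open Scope R_scope.

Fixpoint cpow (k : nat) (y1 y2 : R) : R * R :=
  match k with
  | O => (1, 0)
  | S k' => let p := cpow k' y1 y2 in
            (fst p * y1 - snd p * y2, fst p * y2 + snd p * y1)
  end.

Lemma cpow_cos_sin k th : cpow k (cos th) (sin th) = (cos (INR k * th), sin (INR k * th)).
Proof.
  induction k as [|k IH]; simpl cpow.
  - rewrite Rmult_0_l, cos_0, sin_0; reflexivity.
  - rewrite IH, S_INR, Rmult_plus_distr_r, Rmult_1_l, cos_plus, sin_plus; simpl.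
    f_equal; ring.
Qed.

Lemma derivable_pt_lim_value f x l l' :
  derivable_pt_lim f x l -> l = l' -> derivable_pt_lim f x l'.
Proof. now intros D <-. Qed.

Lemma cpow_derive k (y1 y2 : R -> R) t h :
  derivable_pt_lim y1 t (- h * y2 t) -> derivable_pt_lim y2 t (h * y1 t) ->
  derivable_pt_lim (fun s => fst (cpow k (y1 s) (y2 s))) t
    (- INR k * h * snd (cpow k (y1 t) (y2 t))) /\
  derivable_pt_lim (fun s => snd (cpow k (y1 s) (y2 s))) t
    (INR k * h * fst (cpow k (y1 t) (y2 t))).
Proof.
  intros D1 D2. induction k as [|k [IH1 IH2]]; simpl cpow; simpl fst; simpl snd.
  - simpl INR. split; (eapply derivable_pt_lim_value; [apply derivable_pt_lim_const | ring]).
  - rewrite S_INR. split; eapply derivable_pt_lim_value.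
    + exact (derivable_pt_lim_minus _ _ _ _ _
        (derivable_pt_lim_mult _ _ _ _ _ IH1 D1) (derivable_pt_lim_mult _ _ _ _ _ IH2 D2)).
    + cbv beta; ring.
    + exact (derivable_pt_lim_plus _ _ _ _ _
        (derivable_pt_lim_mult _ _ _ _ _ IH1 D2) (derivable_pt_lim_mult _ _ _ _ _ IH2 D1)).
    + cbv beta; ring.
Qed.

Lemma cpow_continuity k (y1 y2 : R -> R) t :
  continuity_pt y1 t -> continuity_pt y2 t ->
  continuity_pt (fun s => fst (cpow k (y1 s) (y2 s))) t /\
  continuity_pt (fun s => snd (cpow k (y1 s) (y2 s))) t.
Proof.
  intros C1 C2. induction k as [|k [IH1 IH2]]; simpl cpow; simpl fst; simpl snd.
  - split; apply continuity_pt_const; intros a b; reflexivity.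
  - split.
    + exact (continuity_pt_minus _ _ _
        (continuity_pt_mult _ _ _ IH1 C1) (continuity_pt_mult _ _ _ IH2 C2)).
    + exact (continuity_pt_plus _ _ _
        (continuity_pt_mult _ _ _ IH1 C2) (continuity_pt_mult _ _ _ IH2 C1)).
Qed.

Lemma derivable_pt_lim_exp_scal a t :
  derivable_pt_lim (fun s => exp (a * s)) t (a * exp (a * t)).
Proof.
  assert (Dlin : derivable_pt_lim (fun s => a * s) t a).
  { eapply derivable_pt_lim_value;
      [exact (derivable_pt_lim_scal id a t 1 (derivable_pt_lim_id t)) | ring]. }
  eapply derivable_pt_lim_value;
    [exact (derivable_pt_lim_comp _ exp t a _ Dlin (derivable_pt_lim_exp (a * t))) | ring].
Qed.

Lemma lim_minus_infty_ext (f f' : R -> R) L :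
  (forall t, t <= 0 -> f t = f' t) -> lim_minus_infty f' L -> lim_minus_infty f L.
Proof.
  intros E H eps Heps. destruct (H eps Heps) as [T HT]. exists (Rmin T 0). intros t Ht.
  pose proof (Rmin_l T 0). pose proof (Rmin_r T 0).
  rewrite E by lra. apply HT. lra.
Qed.

Lemma lim_minus_infty_comp (u F : R -> R) a :
  lim_minus_infty u a -> continuity_pt F a -> lim_minus_infty (fun t => F (u t)) (F a).
Proof.
  intros Hu HF eps Heps.
  destruct (HF eps Heps) as [al [Hal HFal]].
  destruct (Hu al Hal) as [T HT]. exists T. intros t Ht.
  destruct (Req_dec (u t) a) as [->|Hne].
  - unfold Rminus. rewrite Rplus_opp_r, Rabs_R0. exact Heps.
  - apply (HFal (u t)). split; [split; [exact I | auto] | exact (HT t Ht)].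
Qed.

Lemma lim_minus_infty_exp K : 0 < K -> lim_minus_infty (fun t => exp (K * t)) 0.
Proof.
  intros HK eps Heps. exists (ln (eps / 2) / K). intros t Ht.
  assert (Hkt : K * t <= ln (eps / 2)).
  { apply (Rmult_le_compat_l K) in Ht; [|lra].
    replace (K * (ln (eps / 2) / K)) with (ln (eps / 2)) in Ht by (field; lra). exact Ht. }
  assert (exp (K * t) <= eps / 2).
  { rewrite <- (exp_ln (eps / 2)) by lra. destruct Hkt as [Hlt|Heq]; [|rewrite Heq; lra].
    left. apply exp_increasing, Hlt. }
  pose proof (exp_pos (K * t)).
  rewrite Rminus_0_r, Rabs_right; lra.
Qed.

Definition left_continuous (f : R -> R) (a : R) : Prop :=
  forall eps, 0 < eps -> exists d, 0 < d /\ forall t, a - d < t <= a -> Rabs (f t - f a) < eps.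

(* Extending [f] constantly to the right of [a] turns one-sided continuity at [a]
   into [continuity_pt], so that the usual continuity lemmas apply. *)
Definition freeze_after (a : R) (f : R -> R) (s : R) : R :=
  if Rle_dec s a then f s else f a.

Lemma freeze_after_le a f s : s <= a -> freeze_after a f s = f s.
Proof. unfold freeze_after. destruct (Rle_dec s a); [reflexivity | lra]. Qed.

Lemma freeze_after_continuity f a : left_continuous f a -> continuity_pt (freeze_after a f) a.
Proof.
  intros Hf eps Heps. destruct (Hf eps Heps) as [d [Hd Hfd]].
  exists d. split; [exact Hd|]. intros s [_ Hs]. simpl in *. unfold R_dist in *.
  rewrite (freeze_after_le a f a) by lra. unfold freeze_after.
  destruct (Rle_dec s a).
  - apply Hfd. apply Rabs_def2 in Hs. lra.
  - unfold Rminus. rewrite Rplus_opp_r, Rabs_R0. exact Heps.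
Qed.

Lemma left_continuous_of_continuity_pt (f f' : R -> R) a :
  (forall s, s <= a -> f s = f' s) -> continuity_pt f' a -> left_continuous f a.
Proof.
  intros E Hf' eps Heps. destruct (Hf' eps Heps) as [d [Hd Hf'd]].
  exists d. split; [exact Hd|]. intros s Hs. rewrite !E by lra.
  destruct (Req_dec s a) as [->|Hne].
  - unfold Rminus. rewrite Rplus_opp_r, Rabs_R0. exact Heps.
  - apply (Hf'd s). split; [split; [exact I | auto]|].
    simpl. unfold R_dist. apply Rabs_def1; lra.
Qed.

Lemma constant_of_derive_zero (f : R -> R) a :
  (forall t, t < a -> derivable_pt_lim f t 0) -> left_continuous f a ->
  forall t, t <= a -> f t = f a.
Proof.
  intros Hd Hl t Ht.
  assert (Hconst : forall u v, u <= v < a -> f v = f u).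
  { intros u v Huv.
    assert (pr : forall x, u < x < v -> derivable_pt f x) by (intros x Hx; exists 0; apply Hd; lra).
    apply (null_derivative_loc f u v pr); [| | lra].
    - intros x Hx. apply derivable_continuous_pt. exists 0. apply Hd. lra.
    - intros x P. apply derive_pt_eq_0, Hd. lra. }
  destruct (Req_dec (f t) (f a)) as [E|Hne]; [exact E|exfalso].
  assert (Hpos : 0 < Rabs (f t - f a)) by (apply Rabs_pos_lt; lra).
  destruct (Hl _ Hpos) as [d [Hd0 Hfd]].
  assert (Hta : t < a) by (destruct Ht as [Hlt|Heq]; [exact Hlt | subst; contradiction]).
  pose proof (Rmax_l ((t + a) / 2) (a - d / 2)).
  pose proof (Rmax_r ((t + a) / 2) (a - d / 2)).
  set (s := Rmax ((t + a) / 2) (a - d / 2)) in *.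
  assert (s < a) by (apply Rmax_lub_lt; lra).
  specialize (Hfd s ltac:(lra)). rewrite (Hconst t s) in Hfd by lra. lra.
Qed.

Definition mean_curv (g m1 m2 : nat) (x : R * R) : R :=
  sum1 (fun k => INR (mult m1 m2 k) * AS_eig g k x) g.

Lemma rnorm_unit y1 y2 : y1 ^ 2 + y2 ^ 2 = 1 -> rnorm (y1, y2) = 1.
Proof. intro H. unfold rnorm, inner; simpl. rewrite <- sqrt_1. f_equal. lra. Qed.

Lemma AS_eig_unit g k y1 y2 : y1 ^ 2 + y2 ^ 2 = 1 ->
  AS_eig g k (y1, y2) =
  (y2 * fst (alpha_k g k) - y1 * snd (alpha_k g k))
  / (y1 * fst (alpha_k g k) + y2 * snd (alpha_k g k)).
Proof.
  intro H. unfold AS_eig, shape_eig, sphere_normal, inner.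
  rewrite rnorm_unit by exact H. simpl. unfold Rdiv. rewrite Rinv_1. ring.
Qed.

Lemma HS_vec_unit g m1 m2 y1 y2 : y1 ^ 2 + y2 ^ 2 = 1 ->
  HS_vec g m1 m2 (y1, y2) =
  (- mean_curv g m1 m2 (y1, y2) * y2, mean_curv g m1 m2 (y1, y2) * y1).
Proof.
  intro H. unfold HS_vec, sphere_normal. rewrite rnorm_unit by exact H.
  fold (mean_curv g m1 m2 (y1, y2)). simpl. f_equal; field.
Qed.

Lemma HS_vec_normsq_unit g m1 m2 y1 y2 : y1 ^ 2 + y2 ^ 2 = 1 ->
  inner (HS_vec g m1 m2 (y1, y2)) (HS_vec g m1 m2 (y1, y2)) = mean_curv g m1 m2 (y1, y2) ^ 2.
Proof.
  intro H. rewrite HS_vec_unit by exact H. unfold inner; simpl.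
  transitivity (mean_curv g m1 m2 (y1, y2) ^ 2 * (y1 ^ 2 + y2 ^ 2)); [ring | rewrite H; ring].
Qed.

Definition regular_point (g : nat) (x : R * R) : Prop :=
  forall k, (1 <= k <= g)%nat -> inner x (alpha_k g k) <> 0.

Lemma chamber_unit_angle g y1 y2 :
  in_chamber g (y1, y2) -> y1 ^ 2 + y2 ^ 2 = 1 ->
  exists th, 0 < th < PI / INR g /\ y1 = cos th /\ y2 = sin th.
Proof.
  intros [r [th [Hr [H0 [Hpi E]]]]] Hunit. injection E as -> ->.
  pose proof (sin2_cos2 th) as Hsc. unfold Rsqr in Hsc.
  assert (r = 1) by nra. subst r.
  exists th. repeat split; try lra; ring.
Qed.

Lemma chamber_regular g th : (1 <= g)%nat -> 0 < th < PI / INR g ->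
  regular_point g (cos th, sin th).
Proof.
  intros Hg Hth k Hk.
  assert (Hk1 : 1 <= INR k) by (apply (le_INR 1); lia).
  assert (Hkg : INR k <= INR g) by (apply le_INR; lia).
  assert (Hg0 : 0 < INR g) by lra.
  pose proof PI_RGT_0.
  assert (PI / INR g <= INR k * PI / INR g <= PI).
  { split; apply (Rmult_le_reg_r (INR g)); try lra; field_simplify; nra. }
  unfold inner, alpha_k, theta_k; simpl. rewrite <- cos_minus.
  apply Rgt_not_eq, cos_gt_0; lra.
Qed.

Lemma chamber_sin_pos g th : (1 <= g)%nat -> 0 < th < PI / INR g -> 0 < sin (INR g * th).
Proof.
  intros Hg Hth. assert (Hg0 : 0 < INR g) by (apply lt_0_INR; lia).
  apply sin_gt_0; [nra|].
  apply (Rmult_lt_reg_r (/ INR g)); [apply Rinv_0_lt_compat; lra|].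
  replace (INR g * th * / INR g) with th by (field; lra). exact (proj2 Hth).
Qed.

Lemma alpha_k_sin_cos g k :
  alpha_k g k = (sin (INR k * PI / INR g), - cos (INR k * PI / INR g)).
Proof.
  unfold alpha_k, theta_k.
  replace (INR k * PI / INR g - PI / 2) with (- (PI / 2 - INR k * PI / INR g)) by ring.
  rewrite cos_neg, sin_neg, cos_shift, sin_shift. reflexivity.
Qed.

Lemma inv_sqrt2 : 1 / sqrt 2 = sqrt 2 / 2.
Proof.
  assert (H : sqrt 2 * sqrt 2 = 2) by (apply sqrt_sqrt; lra).
  assert (sqrt 2 <> 0) by (intro E; rewrite E in H; lra).
  field_simplify_eq; [lra | assumption].
Qed.

Ltac alpha_value a :=
  rewrite alpha_k_sin_cos; replace (INR _ * PI / INR _) with a by (simpl; field);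
  repeat first [ rewrite sin_PI_x | rewrite Rtrigo_facts.cos_pi_minus
    | rewrite sin_PI6 | rewrite cos_PI6 | rewrite sin_PI3 | rewrite cos_PI3
    | rewrite sin_PI4 | rewrite cos_PI4 | rewrite inv_sqrt2 | rewrite sin_PI2 | rewrite cos_PI2
    | rewrite sin_PI | rewrite cos_PI ];
  f_equal; try field.

Lemma alpha_1_1 : alpha_k 1 1 = (0, 1). Proof. alpha_value PI. Qed.
Lemma alpha_2_1 : alpha_k 2 1 = (1, 0). Proof. alpha_value (PI / 2). Qed.
Lemma alpha_2_2 : alpha_k 2 2 = (0, 1). Proof. alpha_value PI. Qed.
Lemma alpha_3_1 : alpha_k 3 1 = (sqrt 3 / 2, - (1 / 2)). Proof. alpha_value (PI / 3). Qed.
Lemma alpha_3_2 : alpha_k 3 2 = (sqrt 3 / 2, 1 / 2). Proof. alpha_value (PI - PI / 3). Qed.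
Lemma alpha_3_3 : alpha_k 3 3 = (0, 1). Proof. alpha_value PI. Qed.
Lemma alpha_4_1 : alpha_k 4 1 = (sqrt 2 / 2, - (sqrt 2 / 2)). Proof. alpha_value (PI / 4). Qed.
Lemma alpha_4_2 : alpha_k 4 2 = (1, 0). Proof. alpha_value (PI / 2). Qed.
Lemma alpha_4_3 : alpha_k 4 3 = (sqrt 2 / 2, sqrt 2 / 2). Proof. alpha_value (PI - PI / 4). Qed.
Lemma alpha_4_4 : alpha_k 4 4 = (0, 1). Proof. alpha_value PI. Qed.
Lemma alpha_6_1 : alpha_k 6 1 = (1 / 2, - (sqrt 3 / 2)). Proof. alpha_value (PI / 6). Qed.
Lemma alpha_6_2 : alpha_k 6 2 = (sqrt 3 / 2, - (1 / 2)). Proof. alpha_value (PI / 3). Qed.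
Lemma alpha_6_3 : alpha_k 6 3 = (1, 0). Proof. alpha_value (PI / 2). Qed.
Lemma alpha_6_4 : alpha_k 6 4 = (sqrt 3 / 2, 1 / 2). Proof. alpha_value (PI - PI / 3). Qed.
Lemma alpha_6_5 : alpha_k 6 5 = (1 / 2, sqrt 3 / 2). Proof. alpha_value (PI - PI / 6). Qed.
Lemma alpha_6_6 : alpha_k 6 6 = (0, 1). Proof. alpha_value PI. Qed.

#[local] Hint Rewrite alpha_1_1 alpha_2_1 alpha_2_2 alpha_3_1 alpha_3_2 alpha_3_3
  alpha_4_1 alpha_4_2 alpha_4_3 alpha_4_4
  alpha_6_1 alpha_6_2 alpha_6_3 alpha_6_4 alpha_6_5 alpha_6_6 : alpha_values.

Definition curvature_identities (g m1 m2 : nat) (y1 y2 : R) : Prop :=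
  let G := INR g in let M1 := INR m1 in let M2 := INR m2 in
  let c := fst (cpow g y1 y2) in let s := snd (cpow g y1 y2) in
  mean_curv g m1 m2 (y1, y2) * s = - (G * (M1 + M2) / 2) * c - G * (M2 - M1) / 2 /\
  AS_normsq g m1 m2 (y1, y2) * s ^ 2 =
    (G - 1) * (G * (M1 + M2) / 2) * s ^ 2 + G * (G * (M1 + M2) / 2 * c + G * (M2 - M1) / 2) * c.

Lemma curvature_identities_hold g m1 m2 y1 y2 :
  (g = 1%nat \/ g = 2%nat \/ g = 3%nat \/ g = 4%nat \/ g = 6%nat) ->
  (Nat.odd g = true -> m1 = m2) -> y1 ^ 2 + y2 ^ 2 = 1 -> regular_point g (y1, y2) ->
  curvature_identities g m1 m2 y1 y2.
Proof.
  intros Hg Hodd Hunit Hreg.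
  assert (Hs2 : sqrt 2 * sqrt 2 = 2) by (apply sqrt_sqrt; lra).
  assert (Hs3 : sqrt 3 * sqrt 3 = 3) by (apply sqrt_sqrt; lra).
  unfold curvature_identities, mean_curv, AS_normsq.
  (* The denominators <y, alpha_k> are nonzero by regularity; the radicals stay
     abstract, nsatz only needs their squares. *)
  destruct Hg as [->|[->|[->|[->| ->]]]];
    [ rewrite (Hodd eq_refl) | | rewrite (Hodd eq_refl) | | ];
    simpl sum1; rewrite !AS_eig_unit by exact Hunit;
    try pose proof (Hreg 1%nat ltac:(lia)); try pose proof (Hreg 2%nat ltac:(lia));
    try pose proof (Hreg 3%nat ltac:(lia)); try pose proof (Hreg 4%nat ltac:(lia));
    try pose proof (Hreg 5%nat ltac:(lia)); try pose proof (Hreg 6%nat ltac:(lia));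
    clear Hreg; autorewrite with alpha_values in *; unfold inner, mult in *; simpl in *;
    set (s2 := sqrt 2) in *; set (s3 := sqrt 3) in *;
    (split; (field_simplify_eq;
      [ cbn [pow]; nsatz
      | repeat split; intro E; match goal with H : _ <> 0 |- _ => apply H; lra end ])).
Qed.

Section Isoparametric.

Variables g m1 m2 n : nat.
Hypothesis Hg : g = 1%nat \/ g = 2%nat \/ g = 3%nat \/ g = 4%nat \/ g = 6%nat.
Hypothesis Hm1 : (1 <= m1)%nat.
Hypothesis Hm12 : (m1 <= m2)%nat.
Hypothesis Hodd : Nat.odd g = true -> m1 = m2.
Hypothesis Hdim : ((m1 + m2) * g = 2 * n)%nat.

Lemma g_ge1 : (1 <= g)%nat.
Proof. destruct Hg as [|[|[|[|]]]]; subst; lia. Qed.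

Lemma n_value : INR n = INR g * (INR m1 + INR m2) / 2.
Proof.
  apply (f_equal INR) in Hdim. rewrite !mult_INR, plus_INR in Hdim. simpl in Hdim. lra.
Qed.

Lemma n_ge1 : 1 <= INR n.
Proof.
  rewrite n_value. pose proof (le_INR 1 _ g_ge1). pose proof (le_INR 1 _ Hm1).
  pose proof (le_INR _ _ Hm12). simpl in *. nra.
Qed.

Lemma n_delta : INR n * delta g m1 m2 = INR g * (INR m2 - INR m1) / 2.
Proof.
  pose proof (le_INR 1 _ Hm1). pose proof (le_INR _ _ Hm12). simpl in *.
  rewrite n_value. unfold delta. destruct (2 <=? g)%nat eqn:E; cbv iota.
  - field. lra.
  - apply Nat.leb_gt in E. assert (g = 1%nat) by (pose proof g_ge1; lia). subst g.
    rewrite (Hodd eq_refl). lra.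
Qed.

Lemma delta_range : 0 <= delta g m1 m2 < 1.
Proof.
  pose proof (le_INR 1 _ Hm1). pose proof (le_INR _ _ Hm12). simpl in *.
  unfold delta. destruct (2 <=? g)%nat; cbv iota; [|lra].
  assert (Hq : (INR m2 - INR m1) / (INR m2 + INR m1) = 1 - 2 * INR m1 / (INR m2 + INR m1))
    by (field; lra).
  assert (0 < INR m1 / (INR m2 + INR m1) <= 1 / 2).
  { split; [apply Rdiv_lt_0_compat; lra|].
    apply (Rmult_le_reg_r (INR m2 + INR m1)); [lra|]. field_simplify; lra. }
  lra.
Qed.

Lemma chamber_curvature y1 y2 : y1 ^ 2 + y2 ^ 2 = 1 -> in_chamber g (y1, y2) ->
  let c := fst (cpow g y1 y2) in let s := snd (cpow g y1 y2) in
  0 < s /\ c ^ 2 + s ^ 2 = 1 /\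
  mean_curv g m1 m2 (y1, y2) * s = - INR n * (c + delta g m1 m2) /\
  AS_normsq g m1 m2 (y1, y2) * s ^ 2 =
    (INR g - 1) * INR n * s ^ 2 + INR g * INR n * (c + delta g m1 m2) * c.
Proof.
  intros Hunit Hch c s.
  destruct (chamber_unit_angle g y1 y2 Hch Hunit) as [th [Hth [E1 E2]]].
  destruct (curvature_identities_hold g m1 m2 y1 y2 Hg Hodd Hunit)
    as [Hmean Hnorm]; [rewrite E1, E2; exact (chamber_regular g th g_ge1 Hth)|].
  fold c s in Hmean, Hnorm.
  assert (Hcs : c = cos (INR g * th) /\ s = sin (INR g * th)).
  { unfold c, s. rewrite E1, E2, cpow_cos_sin. split; reflexivity. }
  pose proof (sin2_cos2 (INR g * th)). unfold Rsqr in *.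
  repeat split.
  - rewrite (proj2 Hcs). exact (chamber_sin_pos g th g_ge1 Hth).
  - destruct Hcs as [-> ->]. lra.
  - rewrite Hmean.
    replace (- INR n * (c + delta g m1 m2)) with (- (INR n * c) - INR n * delta g m1 m2) by ring.
    rewrite n_delta, n_value. field.
  - rewrite Hnorm.
    replace (INR g * INR n * (c + delta g m1 m2) * c)
      with (INR g * (INR n * c + INR n * delta g m1 m2) * c) by ring.
    rewrite n_delta, n_value. field.
Qed.

Lemma chamber_nonminimal y1 y2 : y1 ^ 2 + y2 ^ 2 = 1 -> in_chamber g (y1, y2) ->
  HS_vec g m1 m2 (y1, y2) <> (0, 0) -> fst (cpow g y1 y2) + delta g m1 m2 <> 0.
Proof.
  intros Hunit Hch Hne Hzero. apply Hne.
  destruct (chamber_curvature y1 y2 Hunit Hch) as [Hs [_ [Hmean _]]].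
  rewrite Hzero, Rmult_0_r in Hmean.
  apply Rmult_integral in Hmean as [Hh|]; [|lra].
  rewrite HS_vec_unit, Hh by exact Hunit. f_equal; ring.
Qed.

Section Flow.

Variables y1 y2 : R -> R.
Hypothesis Hunit : forall t, t <= 0 -> (y1 t) ^ 2 + (y2 t) ^ 2 = 1.
Hypothesis Hch : forall t, t <= 0 -> in_chamber g (y1 t, y2 t).
Hypothesis Hflow : forall t, t < 0 ->
  derivable_pt_lim y1 t (fst (HS_vec g m1 m2 (y1 t, y2 t))) /\
  derivable_pt_lim y2 t (snd (HS_vec g m1 m2 (y1 t, y2 t))).
Hypothesis Hcont0 : forall eps, 0 < eps -> exists d, 0 < d /\
  forall t, - d < t <= 0 -> Rabs (y1 t - y1 0) < eps /\ Rabs (y2 t - y2 0) < eps.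

Let cos_g t := fst (cpow g (y1 t) (y2 t)).
Let K0 := cos_g 0 + delta g m1 m2.

Lemma flow_left_continuous : left_continuous y1 0 /\ left_continuous y2 0.
Proof.
  split; intros eps Heps; destruct (Hcont0 eps Heps) as [d [Hd Hy]];
    exists d; split; trivial; intros t Ht; apply Hy; lra.
Qed.

Lemma cos_g_exponential t : t <= 0 -> cos_g t + delta g m1 m2 = K0 * exp (INR g * INR n * t).
Proof.
  intro Ht. set (K := INR g * INR n).
  set (E := fun s => (cos_g s + delta g m1 m2) * exp (- K * s)).
  assert (Hder : forall s, s < 0 -> derivable_pt_lim E s 0).
  { intros s Hs. destruct (Hflow s Hs) as [D1 D2].
    destruct (chamber_curvature (y1 s) (y2 s) (Hunit s (Rlt_le _ _ Hs)) (Hch s (Rlt_le _ _ Hs)))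
      as [_ [_ [Hmean _]]].
    rewrite HS_vec_unit in D1, D2 by exact (Hunit s (Rlt_le _ _ Hs)). simpl in D1, D2.
    destruct (cpow_derive g y1 y2 s _ D1 D2) as [Dc _].
    pose proof (derivable_pt_lim_mult _ _ _ _ _
      (derivable_pt_lim_plus _ _ _ _ _ Dc (derivable_pt_lim_const (delta g m1 m2) s))
      (derivable_pt_lim_exp_scal (- K) s)) as D.
    eapply derivable_pt_lim_value; [exact D|].
    transitivity (- INR g * (mean_curv g m1 m2 (y1 s, y2 s) * snd (cpow g (y1 s) (y2 s))
                             + INR n * (cos_g s + delta g m1 m2)) * exp (- K * s)).
    - unfold cos_g, K, plus_fct, fct_cte. ring.
    - rewrite Hmean. unfold cos_g. ring. }
  assert (Hleft : left_continuous E 0).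
  { destruct flow_left_continuous as [C1 C2].
    apply (left_continuous_of_continuity_pt E
      (fun s => (fst (cpow g (freeze_after 0 y1 s) (freeze_after 0 y2 s)) + delta g m1 m2)
                * exp (- K * s))).
    - intros s Hs. unfold E, cos_g. rewrite !freeze_after_le by exact Hs. reflexivity.
    - destruct (cpow_continuity g _ _ 0 (freeze_after_continuity y1 0 C1)
        (freeze_after_continuity y2 0 C2)) as [Cc _].
      apply continuity_pt_mult.
      + apply continuity_pt_plus; [exact Cc | apply continuity_pt_const; now intros a b].
      + apply derivable_continuous_pt. exists (- K * exp (- K * 0)).
        exact (derivable_pt_lim_exp_scal (- K) 0). }
  pose proof (constant_of_derive_zero E 0 Hder Hleft t Ht) as HE.
  unfold E, K0 in *. rewrite Rmult_0_r, exp_0, Rmult_1_r in HE. rewrite <- HE.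
  rewrite Rmult_assoc, <- exp_plus. replace (- K * t + K * t) with 0 by ring. rewrite exp_0. ring.
Qed.

Lemma flow_curvature t : t <= 0 ->
  let s := snd (cpow g (y1 t) (y2 t)) in
  0 < s /\ cos_g t ^ 2 + s ^ 2 = 1 /\
  mean_curv g m1 m2 (y1 t, y2 t) * s = - INR n * (K0 * exp (INR g * INR n * t)) /\
  AS_normsq g m1 m2 (y1 t, y2 t) * s ^ 2 =
    (INR g - 1) * INR n * s ^ 2 + INR g * INR n * (K0 * exp (INR g * INR n * t)) * cos_g t.
Proof.
  intros Ht s. rewrite <- (cos_g_exponential t Ht).
  destruct (chamber_curvature (y1 t) (y2 t) (Hunit t Ht) (Hch t Ht)) as [Hs [Hcs [Hmean Hnorm]]].
  unfold cos_g. repeat split; assumption.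
Qed.

Lemma normsq_limit :
  lim_minus_infty (fun t => AS_normsq g m1 m2 (y1 t, y2 t)) ((INR g - 1) * INR n).
Proof.
  pose proof delta_range. pose proof n_ge1. pose proof (le_INR 1 _ g_ge1).
  set (F := fun x => (INR g - 1) * INR n
    + INR g * INR n * (K0 * x) * (K0 * x - delta g m1 m2) / (1 - (K0 * x - delta g m1 m2) ^ 2)).
  replace ((INR g - 1) * INR n) with (F 0) by (unfold F; field; nra).
  apply (lim_minus_infty_ext _ (fun t => F (exp (INR g * INR n * t)))).
  - intros t Ht. destruct (flow_curvature t Ht) as [Hs [Hcs [_ Hnorm]]].
    assert (Hc : K0 * exp (INR g * INR n * t) - delta g m1 m2 = cos_g t)
      by (rewrite <- (cos_g_exponential t Ht); ring).
    unfold F. rewrite Hc. replace (1 - cos_g t ^ 2) with (snd (cpow g (y1 t) (y2 t)) ^ 2) by lra.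
    apply (Rmult_eq_reg_r (snd (cpow g (y1 t) (y2 t)) ^ 2)); [|apply pow_nonzero; lra].
    rewrite Hnorm. field. lra.
  - apply lim_minus_infty_comp; [apply lim_minus_infty_exp; simpl in *; nra|].
    unfold F. reg. nra.
Qed.

Lemma mean_curv_sq_limit :
  lim_minus_infty
    (fun t => inner (HS_vec g m1 m2 (y1 t, y2 t)) (HS_vec g m1 m2 (y1 t, y2 t))
              * exp (- 2 * INR g * INR n * t))
    (INR n ^ 2 * K0 ^ 2 / (1 - delta g m1 m2 ^ 2)).
Proof.
  pose proof delta_range. pose proof n_ge1. pose proof (le_INR 1 _ g_ge1).
  set (F := fun x => INR n ^ 2 * K0 ^ 2 / (1 - (K0 * x - delta g m1 m2) ^ 2)).
  replace (INR n ^ 2 * K0 ^ 2 / (1 - delta g m1 m2 ^ 2)) with (F 0) by (unfold F; f_equal; ring).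
  apply (lim_minus_infty_ext _ (fun t => F (exp (INR g * INR n * t)))).
  - intros t Ht. destruct (flow_curvature t Ht) as [Hs [Hcs [Hmean _]]].
    assert (Hc : K0 * exp (INR g * INR n * t) - delta g m1 m2 = cos_g t)
      by (rewrite <- (cos_g_exponential t Ht); ring).
    unfold F. rewrite Hc, HS_vec_normsq_unit by exact (Hunit t Ht).
    replace (1 - cos_g t ^ 2) with (snd (cpow g (y1 t) (y2 t)) ^ 2) by lra.
    apply (Rmult_eq_reg_r (snd (cpow g (y1 t) (y2 t)) ^ 2)); [|apply pow_nonzero; lra].
    assert (Hexp : exp (INR g * INR n * t) ^ 2 * exp (- 2 * INR g * INR n * t) = 1).
    { simpl. rewrite Rmult_1_r, <- !exp_plus. rewrite <- exp_0. f_equal. ring. }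
    transitivity ((mean_curv g m1 m2 (y1 t, y2 t) * snd (cpow g (y1 t) (y2 t))) ^ 2
                  * exp (- 2 * INR g * INR n * t)); [ring|].
    rewrite Hmean.
    transitivity (INR n ^ 2 * K0 ^ 2
                  * (exp (INR g * INR n * t) ^ 2 * exp (- 2 * INR g * INR n * t))); [ring|].
    rewrite Hexp. field. lra.
  - apply lim_minus_infty_comp; [apply lim_minus_infty_exp; simpl in *; nra|].
    unfold F. reg. nra.
Qed.

End Flow.

End Isoparametric.

Theorem theorem4p14
  (g m1 m2 n : nat)
  (Hg : g = 1%nat \/ g = 2%nat \/ g = 3%nat \/ g = 4%nat \/ g = 6%nat)
  (Hm1 : (1 <= m1)%nat) (Hm12 : (m1 <= m2)%nat)
  (Hodd : Nat.odd g = true -> m1 = m2)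
  (Hdim : ((m1 + m2) * g = 2 * n)%nat)
  (theta0 : R) (Htheta0 : 0 < theta0 < PI / INR g)
  (y1 y2 : R -> R)
  (Hy0 : y1 0 = cos theta0 /\ y2 0 = sin theta0)
  (Hunit : forall t, t <= 0 -> (y1 t) ^ 2 + (y2 t) ^ 2 = 1)
  (Hch : forall t, t <= 0 -> in_chamber g (y1 t, y2 t))
  (Hflow : forall t, t < 0 ->
     derivable_pt_lim y1 t (fst (HS_vec g m1 m2 (y1 t, y2 t))) /\
     derivable_pt_lim y2 t (snd (HS_vec g m1 m2 (y1 t, y2 t))))
  (Hcont0 : forall eps, 0 < eps -> exists d, 0 < d /\
     forall t, - d < t <= 0 -> Rabs (y1 t - y1 0) < eps /\ Rabs (y2 t - y2 0) < eps) :
  lim_minus_infty (fun t => AS_normsq g m1 m2 (y1 t, y2 t)) ((INR g - 1) * INR n) /\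
  (HS_vec g m1 m2 (y1 0, y2 0) <> (0, 0) ->
     let C0 := (INR n) ^ 2 * (cos (INR g * theta0) + delta g m1 m2) ^ 2
               / (1 - (delta g m1 m2) ^ 2) in
     0 < C0 /\
     lim_minus_infty
       (fun t => inner (HS_vec g m1 m2 (y1 t, y2 t)) (HS_vec g m1 m2 (y1 t, y2 t))
                 * exp (- 2 * INR g * INR n * t))
       C0).
Proof.
  assert (HK0 : fst (cpow g (y1 0) (y2 0)) = cos (INR g * theta0)).
  { destruct Hy0 as [-> ->]. rewrite cpow_cos_sin. reflexivity. }
  split.
  - eapply normsq_limit; eassumption.
  - intros Hnonmin C0. unfold C0. rewrite <- HK0. split.
    + assert (H : fst (cpow g (y1 0) (y2 0)) + delta g m1 m2 <> 0)
        by (eapply chamber_nonminimal; eauto using Rle_refl).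
      assert (0 <= delta g m1 m2 < 1) by (eapply delta_range; eassumption).
      assert (1 <= INR n) by (eapply n_ge1; eassumption).
      pose proof (Rlt_0_sqr _ H). unfold Rsqr in *.
      apply Rdiv_lt_0_compat; [apply Rmult_lt_0_compat|]; simpl; nra.
    + eapply mean_curv_sq_limit; eassumption.
Qed.
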